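(* Let $q>2$ be an integer and $z\geq 2$. Consider the mean-field equation in $u\in[0,1)$, $$u=\frac{1-\exp(\Delta_{\beta,q,z}(u))}{1+(q-1)\exp(\Delta_{\beta,q,z}(u))},\qquad\Delta_{\beta,q,z}(u):=-\frac{\beta}{q^{z-1}}\Big[(1+(q-1)u)^{z-1}-(1-u)^{z-1}\Big].$$ There exist $0<\beta_0(q,z)<\beta_1(q,z)$ such that: for $0<\beta<\beta_0$ the mean-field equation has only the trivial solution $u=0$; for $\beta_0<\beta<\beta_1$ it has exactly two additional solutions $0<u_1<u_2<1$; for $\beta=\beta_0$ or $\beta\geq\beta_1$ it has exactly one additional solution $0<u_2<1$. *)

From Stdlib Require Import Reals Lra.
Open Scope R_scope.

(* Delta_{beta,q,z}(u) = -(beta / q^(z-1)) [ (1+(q-1)u)^(z-1) - (1-u)^(z-1) ],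
   with real exponent z-1 (bases are positive for u in [0,1)). *)
Definition Delta (beta : R) (q : nat) (z : R) (u : R) : R :=
  - (beta / Rpower (INR q) (z - 1)) *
    (Rpower (1 + (INR q - 1) * u) (z - 1) - Rpower (1 - u) (z - 1)).

Definition MF (beta : R) (q : nat) (z : R) (u : R) : R :=
  (1 - exp (Delta beta q z u)) / (1 + (INR q - 1) * exp (Delta beta q z u)).

Definition is_sol (beta : R) (q : nat) (z : R) (u : R) : Prop :=
  0 <= u < 1 /\ u = MF beta q z u.

(* Put c = q - 1 and m = z - 1.  The substitution u = (e^w - 1)/(e^w + c), a
   bijection from w > 0 onto 0 < u < 1, turns the mean-field equation into
   beta = w (e^w + c)^m / (e^(m w) - 1), i.e. ln beta = psi w.  The derivative
   of psi has the sign of S w = (w + ln Mexp(m w) - ln c - ln Nexp(m w)) / w,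
   and S is increasing as soon as ln c > 1/2, which holds for c >= 2.  Hence
   psi decreases from its limit L = m ln(1 + c) - ln m at 0 down to a unique
   minimum at some ws, then increases to infinity.  The theorem holds with
   beta0 = exp (psi ws) and beta1 = exp L. *)

From Pilot Require Import Defs.
From Stdlib Require Import Reals Lra Psatz.
From Coquelicot Require Import Coquelicot.
Open Scope R_scope.

Lemma continuity_pt_of_is_derive f x l : is_derive f x l -> continuity_pt f x.
Proof. intro H. apply derivable_continuous_pt. exists l. now apply is_derive_Reals. Qed.

Lemma increasing_of_derive_pos f f' a b : a < b ->
  (forall x, a <= x <= b -> is_derive f x (f' x)) ->
  (forall x, a < x < b -> 0 < f' x) -> f a < f b.
Proof.
  intros Hab Hd Hp. destruct (MVT_cor2 f f' a b Hab) as [x [Hx Hax]].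
  - intros; apply is_derive_Reals; auto.
  - specialize (Hp x Hax). nra.
Qed.

Lemma decreasing_of_derive_neg f f' a b : a < b ->
  (forall x, a <= x <= b -> is_derive f x (f' x)) ->
  (forall x, a < x < b -> f' x < 0) -> f b < f a.
Proof.
  intros Hab Hd Hn. destruct (MVT_cor2 f f' a b Hab) as [x [Hx Hax]].
  - intros; apply is_derive_Reals; auto.
  - specialize (Hn x Hax). nra.
Qed.

Lemma pos_of_derive_pos f f' : (forall x, is_derive f x (f' x)) ->
  (forall x, 0 < x -> 0 < f' x) -> 0 <= f 0 -> forall x, 0 < x -> 0 < f x.
Proof.
  intros Hd Hp H0 x Hx.
  enough (f 0 < f x) by lra.
  apply (increasing_of_derive_pos f f'); auto.
  intros; apply Hp; lra.
Qed.

Lemma IVT_between f a b y : a < b ->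
  (forall x, a <= x <= b -> continuity_pt f x) ->
  f a < y < f b \/ f b < y < f a -> exists x, a < x < b /\ f x = y.
Proof.
  intros Hab Hf Hy.
  assert (Hcst : forall x, continuity_pt (fun _ => y) x)
    by (intro; apply continuity_pt_const; intros ? ?; reflexivity).
  destruct Hy as [Hy | Hy].
  - destruct (Ranalysis5.IVT_interv (fun x => f x - y) a b) as [x [Hx Hfx]];
      try lra.
    { intros; apply continuity_pt_minus; auto. }
    exists x. assert (x <> a) by (intro; subst; lra).
    assert (x <> b) by (intro; subst; lra). split; lra.
  - destruct (Ranalysis5.IVT_interv (fun x => y - f x) a b) as [x [Hx Hfx]];
      try lra.
    { intros; apply continuity_pt_minus; auto. }
    exists x. assert (x <> a) by (intro; subst; lra).
    assert (x <> b) by (intro; subst; lra). split; lra.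
Qed.

Lemma ln_le_sub1 x : 0 < x -> ln x <= x - 1.
Proof. intro Hx. pose proof (exp_ineq1_le (ln x)). rewrite exp_ln in H; lra. Qed.

Lemma expm1_pos s : 0 < s -> 0 < exp s - 1.
Proof. intro. pose proof (exp_ineq1 s). lra. Qed.

Lemma ln2_gt_half : 1/2 < ln 2.
Proof.
  assert (exp (1/2) < 2).
  { assert (exp (1/2) * exp (1/2) = exp 1) by (rewrite <- exp_plus; f_equal; lra).
    pose proof exp_le_3. pose proof (exp_pos (1/2)). nra. }
  rewrite <- (ln_exp (1/2)). apply ln_increasing; [apply exp_pos | lra].
Qed.

(** * Exponential inequalities *)

Definition Mexp s := exp s - 1 - s.
Definition Nexp s := s * exp s - exp s + 1.

(* [climb f'] reduces [forall s, 0 < s -> 0 < f s] to the same statement for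
   the derivative [f'] of [f], given [0 <= f 0]. *)
Local Ltac climb f' :=
  apply (pos_of_derive_pos _ f');
  [intros ?; auto_derive; [easy | ring] | | rewrite exp_0; lra].

Lemma Mexp_pos s : 0 < s -> 0 < Mexp s.
Proof. intro. unfold Mexp. pose proof (exp_ineq1 s). lra. Qed.

Lemma Nexp_pos : forall s, 0 < s -> 0 < Nexp s.
Proof.
  unfold Nexp. climb (fun s => s * exp s).
  intros x Hx. pose proof (exp_pos x). nra.
Qed.

Lemma Mexp_lt_Nexp : forall s, 0 < s -> Mexp s < Nexp s.
Proof.
  assert (H1 : forall s, 0 < s -> 0 < (s - 1) * exp s + 1).
  { climb (fun s => s * exp s). intros x Hx. pose proof (exp_pos x). nra. }
  assert (H2 : forall s, 0 < s -> 0 < (s - 2) * exp s + s + 2)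
    by (climb (fun s => (s - 1) * exp s + 1); exact H1).
  intros s Hs. specialize (H2 s Hs). unfold Mexp, Nexp. nra.
Qed.

Lemma exp_poly_pos : forall s, 0 < s ->
  0 < (8*s - 28) * exp s + 2*s^3 + 15*s^2 + 26*s + 28.
Proof.
  assert (H1 : forall s, 0 < s -> 0 < (8*s - 4) * exp s + 12).
  { climb (fun s => (8*s + 4) * exp s). intros x Hx. pose proof (exp_pos x). nra. }
  assert (H2 : forall s, 0 < s -> 0 < (8*s - 12) * exp s + 12*s + 30)
    by (climb (fun s => (8*s - 4) * exp s + 12); exact H1).
  assert (H3 : forall s, 0 < s -> 0 < (8*s - 20) * exp s + 6*s^2 + 30*s + 26)
    by (climb (fun s => (8*s - 12) * exp s + 12*s + 30); exact H2).
  climb (fun s => (8*s - 20) * exp s + 6*s^2 + 30*s + 26); exact H3.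
Qed.

Lemma exp2_poly_pos : forall s, 0 < s ->
  0 < (s - 5) * exp s * exp s + (2*s^3 - 3*s^2 + 8*s + 10) * exp s
      - (2*s^2 + 9*s + 5).
Proof.
  assert (H1 : forall s, 0 < s ->
    0 < (4*s - 16) * exp s * exp s + (2*s^3 + 9*s^2 + 8*s + 20) * exp s - 4).
  { climb (fun s => exp s * ((8*s - 28) * exp s + 2*s^3 + 15*s^2 + 26*s + 28)).
    intros x Hx. apply Rmult_lt_0_compat; [apply exp_pos | now apply exp_poly_pos]. }
  assert (H2 : forall s, 0 < s ->
    0 < (2*s - 9) * exp s * exp s + (2*s^3 + 3*s^2 + 2*s + 18) * exp s - (4*s + 9))
    by (climb (fun s => (4*s - 16) * exp s * exp s
                        + (2*s^3 + 9*s^2 + 8*s + 20) * exp s - 4); exact H1).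
  climb (fun s => (2*s - 9) * exp s * exp s
                  + (2*s^3 + 3*s^2 + 2*s + 18) * exp s - (4*s + 9)); exact H2.
Qed.

(* Together with [ln c > 1/2] this is what makes [S] increasing. *)
Lemma ratio_bound s : 0 < s ->
  s*s*exp s / Nexp s - s*(exp s - 1) / Mexp s - (1 - Mexp s / Nexp s) < 1/2.
Proof.
  intro Hs. pose proof (Nexp_pos s Hs). pose proof (Mexp_pos s Hs).
  pose proof (exp2_poly_pos s Hs).
  assert (0 < Nexp s * Mexp s) by nra.
  apply Rmult_lt_reg_r with (Nexp s * Mexp s); [lra |].
  replace ((s*s*exp s / Nexp s - s*(exp s - 1) / Mexp s - (1 - Mexp s / Nexp s))
           * (Nexp s * Mexp s))
    with (s*s*exp s * Mexp s - s*(exp s - 1) * Nexp s - (Nexp s - Mexp s) * Mexp s)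
    by (field; lra).
  unfold Mexp, Nexp in *. nra.
Qed.

(** * The function psi *)

Definition psi c m w := ln w + m * ln (exp w + c) - ln (exp (m*w) - 1).
Definition dpsi c m w := / w + m * exp w / (exp w + c) - m * exp (m*w) / (exp (m*w) - 1).
Definition psi_lim0 c m := m * ln (1 + c) - ln m.

Definition S c m w := (w + ln (Mexp (m*w)) - ln c - ln (Nexp (m*w))) / w.
Definition dS c m w := let s := m*w in
  (ln c + ln (Nexp s) - ln (Mexp s) - s*s*exp s / Nexp s + s*(exp s - 1) / Mexp s)
  / (w*w).

Section Psi.
Variables c m : R.
Hypothesis c_pos : 0 < c.
Hypothesis m_pos : 0 < m.

Lemma psi_derive w : 0 < w -> is_derive (psi c m) w (dpsi c m w).
Proof.
  intro Hw. pose proof (expm1_pos (m*w) ltac:(nra)). pose proof (exp_pos w).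
  unfold psi, dpsi. auto_derive.
  - repeat split; lra.
  - field. lra.
Qed.

Lemma psi_continuity_pt w : 0 < w -> continuity_pt (psi c m) w.
Proof. intro. eapply continuity_pt_of_is_derive, psi_derive; lra. Qed.

Lemma S_derive w : 0 < w -> is_derive (S c m) w (dS c m w).
Proof.
  intro Hw. assert (Hs : 0 < m*w) by nra.
  pose proof (Nexp_pos _ Hs). pose proof (Mexp_pos _ Hs).
  unfold S, dS, Nexp, Mexp in *. auto_derive.
  - repeat split; lra.
  - unfold Rminus. field. repeat split; lra.
Qed.

Lemma S_continuity_pt w : 0 < w -> continuity_pt (S c m) w.
Proof. intro. eapply continuity_pt_of_is_derive, S_derive; lra. Qed.

Lemma dpsi_factor w : 0 < w -> dpsi c m w =
  c * Nexp (m*w) / ((exp w + c) * w * (exp (m*w) - 1)) * (exp (w * S c m w) - 1).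
Proof.
  intro Hw. assert (Hs : 0 < m*w) by nra.
  pose proof (expm1_pos _ Hs). pose proof (exp_pos w).
  pose proof (Nexp_pos _ Hs). pose proof (Mexp_pos _ Hs).
  assert (E : exp (w * S c m w) = exp w * Mexp (m*w) / (c * Nexp (m*w))).
  { rewrite <- (exp_ln (exp w * Mexp (m*w) / (c * Nexp (m*w)))) by
      (apply Rdiv_lt_0_compat; apply Rmult_lt_0_compat; lra).
    f_equal. unfold S. rewrite ln_div, !ln_mult, ln_exp by
      (try apply Rmult_lt_0_compat; lra).
    field. lra. }
  rewrite E. unfold dpsi, Mexp, Nexp in *. field. repeat split; nra.
Qed.

Lemma dpsi_factor_pos w : 0 < w ->
  0 < c * Nexp (m*w) / ((exp w + c) * w * (exp (m*w) - 1)).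
Proof.
  intro Hw. assert (Hs : 0 < m*w) by nra.
  pose proof (expm1_pos _ Hs). pose proof (exp_pos w). pose proof (Nexp_pos _ Hs).
  apply Rdiv_lt_0_compat; [nra |].
  apply Rmult_lt_0_compat; [apply Rmult_lt_0_compat |]; lra.
Qed.

Lemma dpsi_pos_iff w : 0 < w -> (0 < dpsi c m w <-> 0 < S c m w).
Proof.
  intro Hw. rewrite dpsi_factor by lra. pose proof (dpsi_factor_pos w Hw).
  set (P := c * _ / _) in *. split; intro H1.
  - assert (exp 0 < exp (w * S c m w)) by (rewrite exp_0; nra).
    apply exp_lt_inv in H0. nra.
  - assert (exp 0 < exp (w * S c m w)) by (apply exp_increasing; nra).
    rewrite exp_0 in H0. nra.
Qed.

Lemma dpsi_neg_of_S_neg w : 0 < w -> S c m w < 0 -> dpsi c m w < 0.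
Proof.
  intros Hw H1. rewrite dpsi_factor by lra. pose proof (dpsi_factor_pos w Hw).
  assert (exp (w * S c m w) < exp 0) by (apply exp_increasing; nra).
  rewrite exp_0 in H0. nra.
Qed.

Lemma ln_lt_psi w : 0 < w -> ln w < psi c m w.
Proof.
  intro Hw. unfold psi. assert (Hs : 0 < m*w) by nra. pose proof (expm1_pos _ Hs).
  assert (ln (exp (m*w) - 1) < m*w).
  { rewrite <- (ln_exp (m*w)) at 2. apply ln_increasing; lra. }
  assert (w <= ln (exp w + c)).
  { rewrite <- (ln_exp w) at 1. apply ln_le; [apply exp_pos | lra]. }
  nra.
Qed.

Lemma psi_near0 w : 0 < w ->
  psi_lim0 c m - m*w <= psi c m w <= psi_lim0 c m + m*w.
Proof.
  intro Hw. unfold psi, psi_lim0. assert (Hs : 0 < m*w) by nra.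
  pose proof (expm1_pos _ Hs). pose proof (Nexp_pos _ Hs). pose proof (exp_pos w).
  assert (Hup : ln (m*w) <= ln (exp (m*w) - 1))
    by (apply ln_le; [lra | pose proof (exp_ineq1_le (m*w)); lra]).
  assert (Hlo : ln (exp (m*w) - 1) <= ln (m*w * exp (m*w)))
    by (apply ln_le; unfold Nexp in *; lra).
  assert (Hc_lo : ln (1 + c) <= ln (exp w + c))
    by (apply ln_le; [lra | pose proof (exp_ineq1_le w); lra]).
  assert (Hc_up : ln (exp w + c) <= ln (1 + c) + w).
  { rewrite <- (ln_exp w) at 2. rewrite <- ln_mult by lra.
    apply ln_le; [lra |]. pose proof (exp_ineq1_le w). nra. }
  rewrite !ln_mult, ln_exp in * by (try apply exp_pos; lra).
  split; nra.
Qed.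

End Psi.

Lemma dS_pos c m w : 2 <= c -> 0 < m -> 0 < w -> 0 < dS c m w.
Proof.
  intros Hc Hm Hw. assert (Hs : 0 < m*w) by nra.
  unfold dS. set (s := m*w) in *.
  pose proof (Nexp_pos _ Hs). pose proof (Mexp_pos _ Hs). pose proof (ratio_bound _ Hs).
  assert (Hln : 1 - Mexp s / Nexp s <= ln (Nexp s) - ln (Mexp s)).
  { pose proof (ln_le_sub1 (Mexp s / Nexp s) ltac:(apply Rdiv_lt_0_compat; lra)).
    rewrite ln_div in H2 by lra. lra. }
  assert (1/2 < ln c) by (pose proof ln2_gt_half; pose proof (ln_le 2 c); lra).
  apply Rdiv_lt_0_compat; nra.
Qed.

Lemma S_increasing c m a b : 2 <= c -> 0 < m -> 0 < a -> a < b -> S c m a < S c m b.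
Proof.
  intros. apply (increasing_of_derive_pos _ (dS c m)); auto.
  - intros; apply S_derive; lra.
  - intros; apply dS_pos; lra.
Qed.

Lemma S_has_root c m : 2 <= c -> 0 < m -> exists ws, 0 < ws /\ S c m ws = 0.
Proof.
  intros Hc Hm. set (w1 := ln c).
  assert (Hw1 : 0 < w1) by (unfold w1; rewrite <- ln_1; apply ln_increasing; lra).
  assert (HS1 : S c m w1 < 0).
  { assert (Hs : 0 < m*w1) by nra.
    pose proof (Mexp_pos _ Hs). pose proof (Mexp_lt_Nexp _ Hs).
    assert (ln (Mexp (m*w1)) < ln (Nexp (m*w1))) by (apply ln_increasing; lra).
    unfold S. fold w1. apply Rdiv_neg_pos; lra. }
  set (w2 := w1 + 1 + exp (psi c m w1)).
  assert (Hw12 : w1 < w2) by (unfold w2; pose proof (exp_pos (psi c m w1)); lra).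
  assert (Hpsi : psi c m w1 < psi c m w2).
  { pose proof (ln_lt_psi c m ltac:(lra) Hm w2 ltac:(lra)).
    enough (psi c m w1 < ln w2) by lra.
    rewrite <- (ln_exp (psi c m w1)) at 1.
    apply ln_increasing; [apply exp_pos | unfold w2; lra]. }
  destruct (MVT_cor2 (psi c m) (dpsi c m) w1 w2 Hw12) as [x [Hx Hw1x]].
  { intros; apply is_derive_Reals, psi_derive; lra. }
  assert (HSx : 0 < S c m x) by (apply dpsi_pos_iff; nra).
  destruct (IVT_between (S c m) w1 x 0) as [ws [Hws HSws]]; try lra.
  { intros; apply S_continuity_pt; lra. }
  exists ws. split; lra.
Qed.

Lemma psi_unimodal c m : 2 <= c -> 0 < m -> exists ws, 0 < ws /\
  (forall a b, 0 < a -> a < b -> b <= ws -> psi c m b < psi c m a) /\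
  (forall a b, ws <= a -> a < b -> psi c m a < psi c m b).
Proof.
  intros Hc Hm. destruct (S_has_root c m Hc Hm) as [ws [Hws HS]].
  exists ws. split; [| split]; auto.
  - intros a b Ha Hab Hb. apply (decreasing_of_derive_neg _ (dpsi c m)); auto.
    + intros; apply psi_derive; lra.
    + intros x Hx. apply dpsi_neg_of_S_neg; try lra.
      rewrite <- HS. apply S_increasing; lra.
  - intros a b Ha Hab. apply (increasing_of_derive_pos _ (dpsi c m)); auto.
    + intros; apply psi_derive; lra.
    + intros x Hx. apply dpsi_pos_iff; try lra.
      rewrite <- HS. apply S_increasing; lra.
Qed.

(** * Level sets of a valley-shaped function *)

Section Valley.
Variables (f : R -> R) (ws L k : R).
Hypothesis ws_pos : 0 < ws.
Hypothesis k_pos : 0 < k.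
Hypothesis f_cont : forall w, 0 < w -> continuity_pt f w.
Hypothesis f_decr : forall a b, 0 < a -> a < b -> b <= ws -> f b < f a.
Hypothesis f_incr : forall a b, ws <= a -> a < b -> f a < f b.
Hypothesis f_near0 : forall w, 0 < w -> L - k*w <= f w <= L + k*w.
Hypothesis f_unbounded : forall y, exists w, ws < w /\ y < f w.

Lemma valley_min w : 0 < w -> w <> ws -> f ws < f w.
Proof.
  intros Hw Hne. destruct (Rlt_or_le w ws).
  - apply f_decr; lra.
  - apply f_incr; lra.
Qed.

Lemma valley_lt_lim w : 0 < w <= ws -> f w < L.
Proof.
  intro Hw. enough (f (w/2) <= L) by (pose proof (f_decr (w/2) w); lra).
  apply Rle_plus_epsilon. intros eps Heps.
  set (v := Rmin (w/2) (eps/k)).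
  assert (0 < v) by (apply Rmin_glb_lt; [lra | apply Rdiv_lt_0_compat; lra]).
  assert (Hv : v <= eps/k) by apply Rmin_r.
  assert (f (w/2) <= f v).
  { destruct (Req_dec v (w/2)) as [-> | Hne]; [lra |].
    assert (v <= w/2) by apply Rmin_l. left; apply f_decr; lra. }
  assert (k*v <= eps).
  { replace eps with (k * (eps/k)) by (field; lra). apply Rmult_le_compat_l; lra. }
  pose proof (f_near0 v ltac:(lra)). lra.
Qed.

Lemma valley_solve_left y : f ws < y < L -> exists w, 0 < w < ws /\ f w = y.
Proof.
  intro Hy. set (a := Rmin (ws/2) ((L - y)/(2*k))).
  assert (0 < a) by (apply Rmin_glb_lt; [lra | apply Rdiv_lt_0_compat; lra]).
  assert (Ha : a <= (L - y)/(2*k)) by apply Rmin_r.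
  assert (a <= ws/2) by apply Rmin_l.
  assert (k*a <= (L - y)/2).
  { replace ((L - y)/2) with (k * ((L - y)/(2*k))) by (field; lra).
    apply Rmult_le_compat_l; lra. }
  assert (y < f a) by (pose proof (f_near0 a ltac:(lra)); lra).
  destruct (IVT_between f a ws y) as [w [Hw Hfw]]; try lra.
  { intros; apply f_cont; lra. }
  exists w. split; lra.
Qed.

Lemma valley_solve_right y : f ws < y -> exists w, ws < w /\ f w = y.
Proof.
  intro Hy. destruct (f_unbounded y) as [b [Hb Hfb]].
  destruct (IVT_between f ws b y) as [w [Hw Hfw]]; try lra.
  { intros; apply f_cont; lra. }
  exists w. split; lra.
Qed.

Lemma valley_inj_left a b : 0 < a <= ws -> 0 < b <= ws -> f a = f b -> a = b.
Proof.
  intros. destruct (Rtotal_order a b) as [h | [h | h]]; auto.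
  - pose proof (f_decr a b); lra.
  - pose proof (f_decr b a); lra.
Qed.

Lemma valley_inj_right a b : ws <= a -> ws <= b -> f a = f b -> a = b.
Proof.
  intros. destruct (Rtotal_order a b) as [h | [h | h]]; auto.
  - pose proof (f_incr a b); lra.
  - pose proof (f_incr b a); lra.
Qed.

Lemma valley_level_two y : f ws < y < L -> exists w1 w2, 0 < w1 < w2 /\
  forall w, 0 < w -> (f w = y <-> w = w1 \/ w = w2).
Proof.
  intro Hy. destruct (valley_solve_left y Hy) as [w1 [Hw1 Hf1]].
  destruct (valley_solve_right y (proj1 Hy)) as [w2 [Hw2 Hf2]].
  exists w1, w2. split; [lra |]. intros w Hw. split.
  - intro Hf. destruct (Rle_or_lt w ws).
    + left. apply valley_inj_left; lra.
    + right. apply valley_inj_right; lra.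
  - intros [-> | ->]; assumption.
Qed.

Lemma valley_level_one y : y = f ws \/ L <= y -> exists w2, 0 < w2 /\
  forall w, 0 < w -> (f w = y <-> w = w2).
Proof.
  intros [-> | Hy].
  - exists ws. split; [lra |]. intros w Hw. split; [| intros ->; reflexivity].
    intro Hf. destruct (Req_dec w ws); auto. pose proof (valley_min w Hw); lra.
  - assert (f ws < y) by (pose proof (valley_lt_lim ws); lra).
    destruct (valley_solve_right y H) as [w2 [Hw2 Hf2]].
    exists w2. split; [lra |]. intros w Hw. split; [| intros ->; assumption].
    intro Hf. destruct (Rle_or_lt w ws).
    + pose proof (valley_lt_lim w); lra.
    + apply valley_inj_right; lra.
Qed.

End Valley.

Lemma psi_level_sets c m : 2 <= c -> 0 < m -> exists ymin, ymin < psi_lim0 c m /\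
  (forall y, y < ymin -> forall w, 0 < w -> psi c m w <> y) /\
  (forall y, ymin < y < psi_lim0 c m -> exists w1 w2, 0 < w1 < w2 /\
     forall w, 0 < w -> (psi c m w = y <-> w = w1 \/ w = w2)) /\
  (forall y, y = ymin \/ psi_lim0 c m <= y -> exists w2, 0 < w2 /\
     forall w, 0 < w -> (psi c m w = y <-> w = w2)).
Proof.
  intros Hc Hm. destruct (psi_unimodal c m Hc Hm) as [ws [Hws [Hdecr Hincr]]].
  assert (Hcont : forall w, 0 < w -> continuity_pt (psi c m) w)
    by (intros; apply psi_continuity_pt; lra).
  assert (Hnear : forall w, 0 < w ->
    psi_lim0 c m - m*w <= psi c m w <= psi_lim0 c m + m*w)
    by (intros; apply psi_near0; lra).
  assert (Hunb : forall y, exists w, ws < w /\ y < psi c m w).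
  { intro y. exists (ws + 1 + exp y). pose proof (exp_pos y).
    split; [lra |].
    pose proof (ln_lt_psi c m ltac:(lra) Hm (ws + 1 + exp y) ltac:(lra)).
    enough (y < ln (ws + 1 + exp y)) by lra.
    rewrite <- (ln_exp y) at 1. apply ln_increasing; lra. }
  exists (psi c m ws). split; [| split; [| split]].
  - apply (valley_lt_lim (psi c m) ws _ m); auto; lra.
  - intros y Hy w Hw Hpsi. subst y.
    destruct (Req_dec w ws) as [-> | Hne]; [lra |].
    pose proof (valley_min (psi c m) ws Hdecr Hincr w Hw Hne). lra.
  - apply (valley_level_two (psi c m) ws _ m); auto.
  - apply (valley_level_one (psi c m) ws _ m); auto.
Qed.

(** * From the mean-field equation to psi *)

Lemma INR_pred_pos (q : nat) : (1 < q)%nat -> 0 < INR q - 1.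
Proof. intro. assert (1 < INR q) by (apply lt_1_INR; lia). lra. Qed.

Definition u_of_w c w := (exp w - 1) / (exp w + c).

Lemma u_of_w_range c w : 0 < c -> 0 < w -> 0 < u_of_w c w < 1.
Proof.
  intros. unfold u_of_w. pose proof (expm1_pos w H0). split.
  - apply Rdiv_lt_0_compat; lra.
  - apply Rmult_lt_reg_r with (exp w + c); [lra |].
    unfold Rdiv. rewrite Rmult_assoc, Rinv_l by lra. lra.
Qed.

Lemma u_of_w_increasing c a b : 0 < c -> a < b -> u_of_w c a < u_of_w c b.
Proof.
  intros. unfold u_of_w. pose proof (exp_pos a). pose proof (exp_pos b).
  pose proof (exp_increasing a b H0).
  apply Rmult_lt_reg_r with ((exp a + c) * (exp b + c)); [nra |].
  replace ((exp a - 1) / (exp a + c) * ((exp a + c) * (exp b + c)))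
    with ((exp a - 1) * (exp b + c)) by (field; lra).
  replace ((exp b - 1) / (exp b + c) * ((exp a + c) * (exp b + c)))
    with ((exp b - 1) * (exp a + c)) by (field; lra).
  nra.
Qed.

Lemma u_of_w_surj c u : 0 < c -> 0 < u < 1 ->
  exists w, 0 < w /\ u = u_of_w c w.
Proof.
  intros Hc Hu. set (t := (1 + c*u) / (1 - u)).
  assert (Ht : 1 < t).
  { unfold t. apply Rmult_lt_reg_r with (1 - u); [lra |].
    unfold Rdiv. rewrite Rmult_assoc, Rinv_l by lra. nra. }
  exists (ln t). split.
  - rewrite <- ln_1. apply ln_increasing; lra.
  - unfold u_of_w. rewrite exp_ln by lra. unfold t. field. split; nra.
Qed.

Lemma Delta_u_of_w (q : nat) (z beta w : R) : (1 < q)%nat -> 0 < w ->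
  Defs.Delta beta q z (u_of_w (INR q - 1) w) =
  - (beta * (exp ((z - 1) * w) - 1) / exp ((z - 1) * ln (exp w + (INR q - 1)))).
Proof.
  intros Hq Hw. pose proof (INR_pred_pos q Hq) as Hc.
  set (c := INR q - 1) in *. set (m := z - 1).
  pose proof (exp_pos w).
  assert (E1 : 1 + c * u_of_w c w = exp w * (1 + c) / (exp w + c))
    by (unfold u_of_w; field; lra).
  assert (E2 : 1 - u_of_w c w = (1 + c) / (exp w + c)) by (unfold u_of_w; field; lra).
  unfold Defs.Delta, Rpower. fold c m. replace (INR q) with (1 + c) by (unfold c; ring).
  rewrite E1, E2, !ln_div, ln_mult, ln_exp by (try apply Rmult_lt_0_compat; lra).
  replace (m * (w + ln (1 + c) - ln (exp w + c)))
    with (m * w + m * ln (1 + c) + - (m * ln (exp w + c))) by ring.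
  replace (m * (ln (1 + c) - ln (exp w + c)))
    with (m * ln (1 + c) + - (m * ln (exp w + c))) by ring.
  rewrite !exp_plus, !exp_Ropp.
  pose proof (exp_pos (m * ln (1 + c))). pose proof (exp_pos (m * ln (exp w + c))).
  field. lra.
Qed.

(* [MF beta q z u] is [mobius (INR q - 1) (exp (Delta beta q z u))]. *)
Definition mobius c x := (1 - x) / (1 + c * x).

Lemma mobius_involutive c x : 0 < c -> 0 <= x -> mobius c (mobius c x) = x.
Proof. intros. unfold mobius. field. split; nra. Qed.

Lemma mobius_u_of_w c w : 0 < c -> 0 < w -> mobius c (u_of_w c w) = exp (- w).
Proof.
  intros. pose proof (exp_pos w). unfold mobius, u_of_w. rewrite exp_Ropp.
  field. split; nra.
Qed.

Lemma is_sol_u_of_w_iff (q : nat) (z beta w : R) : (1 < q)%nat -> 1 < z -> 0 < beta -> 0 < w ->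
  is_sol beta q z (u_of_w (INR q - 1) w) <-> psi (INR q - 1) (z - 1) w = ln beta.
Proof.
  intros Hq Hz Hb Hw. pose proof (INR_pred_pos q Hq) as Hc.
  pose proof (u_of_w_range _ w Hc Hw).
  unfold is_sol, MF. rewrite Delta_u_of_w by auto.
  set (c := INR q - 1) in *. set (m := z - 1).
  set (A := exp (m*w) - 1). set (E := exp (m * ln (exp w + c))).
  assert (0 < A) by (apply expm1_pos; unfold m; nra).
  assert (0 < E) by apply exp_pos.
  set (D := - (beta * A / E)).
  assert (Hfix : u_of_w c w = mobius c (exp D) <-> D = - w).
  { pose proof (exp_pos D). split; intro Hu.
    - apply exp_inv. rewrite <- (mobius_u_of_w c w), Hu, mobius_involutive; auto; lra.
    - rewrite Hu, <- (mobius_u_of_w c w), mobius_involutive; auto; lra. }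
  assert (HD : D = - w <-> w * E / A = beta).
  { unfold D. split; intro HD.
    - replace w with (beta * A / E) by lra. field. lra.
    - rewrite <- HD. field. lra. }
  assert (Hpsi : psi c m w = ln (w * E / A)).
  { rewrite ln_div, ln_mult by (try apply Rmult_lt_0_compat; lra).
    unfold psi, E, A. rewrite ln_exp. ring. }
  rewrite Hpsi. split.
  - intros [_ Hu]. apply Hfix, HD in Hu. now rewrite Hu.
  - intro Hln. split; [lra |]. apply Hfix, HD, ln_inv; auto.
    apply Rdiv_lt_0_compat; [apply Rmult_lt_0_compat |]; lra.
Qed.

Lemma is_sol_iff (q : nat) (z beta u : R) : (1 < q)%nat -> 1 < z -> 0 < beta ->
  is_sol beta q z u <->
  u = 0 \/ exists w, 0 < w /\ psi (INR q - 1) (z - 1) w = ln beta /\ u = u_of_w (INR q - 1) w.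
Proof.
  intros Hq Hz Hb. pose proof (INR_pred_pos q Hq) as Hc.
  split.
  - intros Hu. destruct (Req_dec u 0) as [-> | Hne]; [now left | right].
    destruct (u_of_w_surj (INR q - 1) u Hc) as [w [Hw ->]]; [destruct Hu; lra |].
    exists w. split; [| split]; auto. now apply is_sol_u_of_w_iff.
  - intros [-> | [w [Hw [Hpsi ->]]]].
    + unfold is_sol, MF, Defs.Delta. replace (1 + (INR q - 1) * 0) with (1 - 0) by ring.
      rewrite Rminus_diag, Rmult_0_r, exp_0.
      split; [lra | field; lra].
    + now apply is_sol_u_of_w_iff.
Qed.

Theorem lemma5p4 (q : nat) (z : R) (hq : (2 < q)%nat) (hz : 2 <= z) :
  exists beta0 beta1 : R, 0 < beta0 < beta1 /\
  forall beta : R, 0 < beta ->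
    (beta < beta0 -> forall u, is_sol beta q z u -> u = 0) /\
    (beta0 < beta < beta1 ->
       exists u1 u2, 0 < u1 < u2 /\ u2 < 1 /\
         is_sol beta q z u1 /\ is_sol beta q z u2 /\
         forall u, is_sol beta q z u -> u = 0 \/ u = u1 \/ u = u2) /\
    ((beta = beta0 \/ beta1 <= beta) ->
       exists u2, 0 < u2 < 1 /\ is_sol beta q z u2 /\
         forall u, is_sol beta q z u -> u = 0 \/ u = u2).
Proof.
  assert (Hq : (1 < q)%nat) by lia. assert (Hz : 1 < z) by lra.
  assert (Hc : 2 <= INR q - 1)
    by (assert (INR 3 <= INR q) by (apply le_INR; lia); simpl in *; lra).
  destruct (psi_level_sets (INR q - 1) (z - 1) Hc ltac:(lra))
    as [ymin [Hmin [Hnone [Htwo Hone]]]].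
  set (c := INR q - 1) in *. set (L := psi_lim0 c (z - 1)) in *.
  exists (exp ymin), (exp L). split; [split; [apply exp_pos | now apply exp_increasing] |].
  intros beta Hb. pose proof (exp_ln beta Hb).
  pose proof (fun u => is_sol_iff q z beta u Hq Hz Hb) as sol. fold c in sol.
  split; [| split].
  - intros Hlo u [-> | [w [Hw [Hpsi _]]]]%sol; [reflexivity |].
    destruct (Hnone (ln beta) ltac:(apply exp_lt_inv; lra) w Hw Hpsi).
  - intros Hbeta. destruct (Htwo (ln beta)) as [w1 [w2 [Hw12 Hlev]]];
      [split; apply exp_lt_inv; lra |].
    pose proof (u_of_w_range c w1 ltac:(lra) ltac:(lra)).
    pose proof (u_of_w_range c w2 ltac:(lra) ltac:(lra)).
    pose proof (u_of_w_increasing c w1 w2 ltac:(lra) (proj2 Hw12)).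
    exists (u_of_w c w1), (u_of_w c w2).
    split; [split | split; [| split; [| split]]]; try lra.
    + apply sol. right. exists w1. split; [lra | split; [apply Hlev |]]; auto; lra.
    + apply sol. right. exists w2. split; [lra | split; [apply Hlev |]]; auto; lra.
    + intros u [-> | [w [Hw [Hpsi ->]]]]%sol; [now left | right].
      destruct (proj1 (Hlev w Hw) Hpsi) as [-> | ->]; auto.
  - intros Hbeta. destruct (Hone (ln beta)) as [w2 [Hw2 Hlev]].
    { destruct Hbeta as [-> | Hge]; [left; apply ln_exp |].
      right. rewrite <- (ln_exp L). apply ln_le; [apply exp_pos | lra]. }
    exists (u_of_w c w2). split; [now apply u_of_w_range; lra | split].
    + apply sol. right. exists w2. split; [lra | split; [apply Hlev |]]; auto.
    + intros u [-> | [w [Hw [Hpsi ->]]]]%sol; [now left | right].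
      now rewrite (proj1 (Hlev w Hw) Hpsi).
Qed.
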